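(* Let $\mathbb{F}$ be a field and let $\mathcal{C}_2 \subsetneqq \mathcal{C}_1 \subseteq \mathbb{F}^n$ be linear codes with $\ell = \dim(\mathcal{C}_1) - \dim(\mathcal{C}_2)$. Then for all integers $1 \leq r \leq \ell$ and $0 \leq \mu \leq n$: $$d_{H,r}(\mathcal{C}_1,\mathcal{C}_2) = d_{M,r}(\Delta(\mathcal{C}_1), \Delta(\mathcal{C}_2)), \qquad K_{H,\mu}(\mathcal{C}_1,\mathcal{C}_2) = K_{M,\mu}(\Delta(\mathcal{C}_1), \Delta(\mathcal{C}_2)).$$
   Context: $\Delta : \mathbb{F}^n \to \mathbb{F}^{n \times n}$ sends $\mathbf{c}$ to the diagonal matrix ${\rm diag}(\mathbf{c})$. For $I \subseteq \{1,\dots,n\}$, $\mathcal{L}_I = \{(c_1,\dots,c_n) \in \mathbb{F}^n \mid c_i = 0 \ \forall i \notin I\}$. Relative generalized Hamming weights: $d_{H,r}(\mathcal{C}_1,\mathcal{C}_2) = \min\{|I| \mid I \subseteq \{1,\dots,n\}, \dim(\mathcal{C}_1 \cap \mathcal{L}_I) - \dim(\mathcal{C}_2 \cap \mathcal{L}_I) \ge r\}$; relative dimension/length profile: $K_{H,\mu}(\mathcal{C}_1,\mathcal{C}_2) = \max\{\dim(\mathcal{C}_1 \cap \mathcal{L}_I) - \dim(\mathcal{C}_2 \cap \mathcal{L}_I) \mid |I| \le \mu\}$. On matrices in $\mathbb{F}^{n\times n}$ (here $m = n$): ${\rm Row}(V)$ is the row space; for a subspace $\mathcal{L}\subseteq\mathbb{F}^n$,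 $\mathcal{V}_\mathcal{L} = \{V \in \mathbb{F}^{n\times n} \mid {\rm Row}(V) \subseteq \mathcal{L}\}$; for nested linear codes $\mathcal{D}_2 \subsetneqq \mathcal{D}_1 \subseteq \mathbb{F}^{n\times n}$, $d_{M,r}(\mathcal{D}_1,\mathcal{D}_2) = \min\{\dim \mathcal{L} \mid \dim(\mathcal{D}_1 \cap \mathcal{V}_\mathcal{L}) - \dim(\mathcal{D}_2 \cap \mathcal{V}_\mathcal{L}) \ge r\}$ and $K_{M,\mu}(\mathcal{D}_1,\mathcal{D}_2) = \max\{\dim(\mathcal{D}_1 \cap \mathcal{V}_\mathcal{L}) - \dim(\mathcal{D}_2 \cap \mathcal{V}_\mathcal{L}) \mid \dim\mathcal{L} \le \mu\}$, over subspaces $\mathcal{L} \subseteq \mathbb{F}^n$. *)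

From HB Require Import structures.
From mathcomp Require Import all_boot all_order all_algebra.
From mathcomp Require Import boolp.
Set Implicit Arguments. Unset Strict Implicit. Unset Printing Implicit Defensive.
Import GRing.Theory.
Local Open Scope ring_scope.

Section Defs.
Variables (F : fieldType) (n : nat).

Definition Delta : 'Hom('rV[F]_n, 'M[F]_n) := linfun (@diag_mx F n).

Definition DeltaC (C : {vspace 'rV[F]_n}) : {vspace 'M[F]_n} := (Delta @: C)%VS.

(* L_I = { c | c_i = 0 for all i \notin I }, as the kernel of the map
   killing the coordinates in I *)
Definition LI (I : {set 'I_n}) : {vspace 'rV[F]_n} :=
  lker (linfun (fun c : 'rV[F]_n => \row_j (if j \in I then 0 else c 0 j))).

(* relative generalized Hamming weight; min over I (the set is nonempty
   whenever 1 <= r <= dim C1 - dim C2; n.+1 is a dummy default) *)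
Definition dH (C1 C2 : {vspace 'rV[F]_n}) (r : nat) : nat :=
  \big[minn/n.+1]_(I : {set 'I_n} |
       (\dim (C2 :&: LI I) + r <= \dim (C1 :&: LI I))%N) #|I|.

Definition KH (C1 C2 : {vspace 'rV[F]_n}) (mu : nat) : nat :=
  \max_(I : {set 'I_n} | (#|I| <= mu)%N)
     (\dim (C1 :&: LI I) - \dim (C2 :&: LI I)).

(* V_L = { V | Row(V) \subseteq L } = { V | every row of V lies in L } *)
Definition VL (L : {vspace 'rV[F]_n}) : {vspace 'M[F]_n} :=
  (\bigcap_(i : 'I_n) (linfun (fun V : 'M[F]_n => row i V) @^-1: L))%VS.

(* relative generalized matrix weight: least dim L over subspaces L of F^n
   (dim L <= n always, so ranging k over 'I_n.+1 loses nothing) *)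
Definition dM (D1 D2 : {vspace 'M[F]_n}) (r : nat) : nat :=
  \big[minn/n.+1]_(k < n.+1 |
     `[< exists L : {vspace 'rV[F]_n}, \dim L = k /\
          (\dim (D2 :&: VL L) + r <= \dim (D1 :&: VL L))%N >]) (k : nat).

(* relative dimension/length profile (matrix); the differences are bounded
   by dim F^{n x n} = n * n *)
Definition KM (D1 D2 : {vspace 'M[F]_n}) (mu : nat) : nat :=
  \max_(j < (n * n).+1 |
     `[< exists L : {vspace 'rV[F]_n}, (\dim L <= mu)%N /\
          (\dim (D1 :&: VL L) - \dim (D2 :&: VL L))%N = j >]) (j : nat).

End Defs.

From HB Require Import structures.
From mathcomp Require Import all_boot all_order all_algebra.
From mathcomp Require Import boolp.
Set Implicit Arguments. Unset Strict Implicit. Unset Printing Implicit Defensive.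
Import GRing.Theory.
Local Open Scope ring_scope.

(* For a subspace L of F^n let J(L) = unit_support L be the set of coordinates
   i whose unit vector e_i lies in L.  The rows of diag(c) are the vectors
   c_i e_i, so diag(c) lies in V_L exactly when c is supported on J(L); hence
   Delta(C) :&: V_L = Delta(C :&: L_J(L)), and since Delta is injective
   dim (Delta(C) :&: V_L) = dim (C :&: L_J(L)).  As |J(L)| <= dim L while
   J(L_I) = I and dim L_I = |I|, the maps L |-> J(L) and I |-> L_I transport
   every candidate of the matrix optimisation problems to a candidate of the
   Hamming ones that is at least as good, and conversely. *)

Section CoordinateSubspaces.
Variables (F : fieldType) (n : nat).
Implicit Types (I : {set 'I_n}) (L U : {vspace 'rV[F]_n}) (c v : 'rV[F]_n).

Definition kill_coords I c : 'rV[F]_n := \row_j (if j \in I then 0 else c 0 j).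

Fact kill_coords_is_linear I : linear (kill_coords I).
Proof.
by move=> a u v; apply/rowP => j; rewrite !mxE; case: ifP; rewrite ?mulr0 ?addr0.
Qed.

HB.instance Definition _ I :=
  GRing.isLinear.Build F _ _ _ (kill_coords I) (kill_coords_is_linear I).

Lemma memLI I v : (v \in LI F I) = [forall j, (j \notin I) ==> (v 0 j == 0)].
Proof.
rewrite memv_ker (lfunE (kill_coords I)); apply/eqP/forallP => [v0 j | vI].
  by apply/implyP => /negbTE jNI; move/rowP/(_ j): v0; rewrite !mxE jNI => ->.
apply/rowP => j; rewrite !mxE; case: ifP => // jNI.
by apply/eqP; move/implyP: (vI j); apply; rewrite jNI.
Qed.

Lemma LI_setT : LI F [set: 'I_n] = fullv.
Proof. by apply/vspaceP => v; rewrite memLI memvf; apply/forallP => j; rewrite in_setT. Qed.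

Lemma delta_mx_LI I i : (delta_mx 0 i \in LI F I) = (i \in I).
Proof.
rewrite memLI; apply/forallP/idP => [eI | iI j].
  by apply: contraT => iNI; move: (eI i); rewrite iNI mxE !eqxx /= oner_eq0.
by rewrite mxE eqxx /=; case: (j =P i) => [->|_]; rewrite ?iI // mulr0n eqxx implybT.
Qed.

Lemma LI_subv I U : {in I, forall i, delta_mx 0 i \in U} -> (LI F I <= U)%VS.
Proof.
move=> eU; apply/subvP => v; rewrite memLI => /forallP vI.
rewrite (row_sum_delta v); apply: memv_suml => j _.
have [jI | jNI] := boolP (j \in I); first by rewrite memvZ // eU.
by move/implyP: (vI j) => /(_ jNI) /eqP->; rewrite scale0r mem0v.
Qed.

Lemma dim_LI_leq I : (\dim (LI F I) <= #|I|)%N.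
Proof.
set E := [seq delta_mx 0 i : 'rV[F]_n | i <- enum I].
have LI_E : (LI F I <= <<E>>)%VS.
  by apply: LI_subv => i iI; apply/memv_span/map_f; rewrite mem_enum.
by rewrite (leq_trans (dimvS LI_E)) // (leq_trans (dim_span E)) // size_map cardE.
Qed.

Lemma LI_addC I : (LI F I + LI F (~: I))%VS = fullv.
Proof.
apply/eqP; rewrite eqEsubv subvf -LI_setT; apply: LI_subv => i _.
have [iI | iNI] := boolP (i \in I).
  by apply: (subvP (addvSl _ _)); rewrite delta_mx_LI.
by apply: (subvP (addvSr _ _)); rewrite delta_mx_LI inE.
Qed.

Lemma dim_LI I : \dim (LI F I) = #|I|.
Proof.
apply/eqP; rewrite eqn_leq dim_LI_leq -(leq_add2r #|~: I|) cardsC card_ord.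
have dim_rV : \dim (fullv : {vspace 'rV[F]_n}) = n by rewrite dimvf /dim /= mul1n.
rewrite -{1}dim_rV -(LI_addC I) (leq_trans (dimv_add_leqif _ _)) //.
by rewrite leq_add2l dim_LI_leq.
Qed.

Definition unit_support L := [set i | delta_mx 0 i \in L].

Lemma unit_support_LI I : unit_support (LI F I) = I.
Proof. by apply/setP => i; rewrite inE delta_mx_LI. Qed.

Lemma card_unit_support L : (#|unit_support L| <= \dim L)%N.
Proof. by rewrite -dim_LI dimvS //; apply: LI_subv => i; rewrite inE. Qed.

Lemma memVL L (M : 'M[F]_n) : (M \in VL L) = [forall i, row i M \in L].
Proof.
rewrite memvE; apply/subv_bigcapP/forallP => [ML i | ML i _].
  by move: (ML i isT); rewrite -memvE -memv_preim lfunE.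
by rewrite -memvE -memv_preim lfunE ML.
Qed.

Lemma diag_mx_VL L c : (diag_mx c \in VL L) = (c \in LI F (unit_support L)).
Proof.
rewrite memVL memLI; apply: eq_forallb => i.
by rewrite row_diag_mx rpredZeq inE implyNb orbC.
Qed.

Lemma lker_Delta : lker (Delta F n) == 0%VS.
Proof.
apply/lker0P => a b; rewrite !lfunE /= => /matrixP eq_ab; apply/rowP => j.
by move: (eq_ab j j); rewrite !mxE eqxx !mulr1n.
Qed.

Lemma DeltaC_capVL C L :
  (DeltaC C :&: VL L)%VS = (Delta F n @: (C :&: LI F (unit_support L)))%VS.
Proof.
apply/vspaceP => M; apply/memv_capP/memv_imgP => [[/memv_imgP [c cC ->]] | [c]].
  by rewrite lfunE diag_mx_VL => cL; exists c; rewrite ?memv_cap ?cC ?cL ?lfunE.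
case/memv_capP => cC cL ->; split; first exact: memv_img.
by rewrite lfunE diag_mx_VL.
Qed.

Lemma dim_DeltaC_capVL C L :
  \dim (DeltaC C :&: VL L) = \dim (C :&: LI F (unit_support L)).
Proof. by rewrite DeltaC_capVL limg_dim_eq // (eqP lker_Delta) capv0. Qed.

Lemma dim_DeltaC_capVL_LI C I :
  \dim (DeltaC C :&: VL (LI F I)) = \dim (C :&: LI F I).
Proof. by rewrite dim_DeltaC_capVL unit_support_LI. Qed.

End CoordinateSubspaces.

HB.instance Definition _ := SemiGroup.isComLaw.Build nat minn minnA minnC.

Lemma bigmin_leq_idx (T : finType) (P : pred T) (f : T -> nat) x :
  (\big[minn/x]_(i | P i) f i <= x)%N.
Proof. by elim/big_rec: _ => // i m _ mx; rewrite geq_min mx orbT. Qed.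

Lemma bigmin_leq_cond (T : finType) (P : pred T) (f : T -> nat) x i0 :
  P i0 -> (\big[minn/x]_(i | P i) f i <= f i0)%N.
Proof. by move=> Pi0; rewrite (bigD1 i0) //= geq_minl. Qed.

Lemma bigmin_leq_transfer (I J : finType) (P : pred I) (Q : pred J)
    (f : I -> nat) (g : J -> nat) x :
  (forall i, P i -> exists2 j, Q j & g j <= f i)%N ->
  (\big[minn/x]_(j | Q j) g j <= \big[minn/x]_(i | P i) f i)%N.
Proof.
move=> PQ; apply: (big_ind (fun m => \big[minn/x]_(j | Q j) g j <= m)%N).
- exact: bigmin_leq_idx.
- by move=> a b le_a le_b; rewrite leq_min le_a.
- by move=> i /PQ [j Qj le_gf]; rewrite (leq_trans (bigmin_leq_cond _ _ Qj)).
Qed.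

Lemma bigmax_leq_transfer (I J : finType) (P : pred I) (Q : pred J)
    (f : I -> nat) (g : J -> nat) :
  (forall i, P i -> exists2 j, Q j & f i <= g j)%N ->
  (\max_(i | P i) f i <= \max_(j | Q j) g j)%N.
Proof.
move=> PQ; apply/bigmax_leqP => i /PQ [j Qj le_fg].
exact: leq_trans le_fg (leq_bigmax_cond _ Qj).
Qed.

Section HammingVsMatrix.
Variables (F : fieldType) (n : nat) (C1 C2 : {vspace 'rV[F]_n}).

Lemma dM_DeltaC r : dM (DeltaC C1) (DeltaC C2) r = dH C1 C2 r.
Proof.
apply/eqP; rewrite eqn_leq; apply/andP; split; apply: bigmin_leq_transfer.
  move=> I C_I.
  have card_I : (#|I| < n.+1)%N by rewrite ltnS (leq_trans (max_card _)) ?card_ord.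
  exists (Ordinal card_I) => //; apply/asboolP; exists (LI F I).
  by rewrite dim_LI !dim_DeltaC_capVL_LI.
move=> k /asboolP [L [<- C_L]]; exists (unit_support L); last exact: card_unit_support.
by rewrite -!dim_DeltaC_capVL.
Qed.

Lemma KM_DeltaC mu : KM (DeltaC C1) (DeltaC C2) mu = KH C1 C2 mu.
Proof.
apply/eqP; rewrite eqn_leq; apply/andP; split; apply: bigmax_leq_transfer.
  move=> j /asboolP [L [dimL <-]]; exists (unit_support L).
    exact: leq_trans (card_unit_support L) dimL.
  by rewrite !dim_DeltaC_capVL.
move=> I card_I; rewrite -!dim_DeltaC_capVL_LI.
set d := (_ - _)%N.
have d_small : (d < (n * n).+1)%N.
  rewrite ltnS (leq_trans (leq_subr _ _)) //.
  by rewrite (leq_trans (dimvS (subvf _))) // dimvf dim_matrix.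
exists (Ordinal d_small) => //; apply/asboolP; exists (LI F I).
by rewrite dim_LI.
Qed.

End HammingVsMatrix.

Theorem theorem8 (F : fieldType) (n : nat) (C1 C2 : {vspace 'rV[F]_n}) :
  (C2 <= C1)%VS -> C2 != C1 ->
  (forall r : nat, (1 <= r <= \dim C1 - \dim C2)%N ->
     dH C1 C2 r = dM (DeltaC C1) (DeltaC C2) r) /\
  (forall mu : nat, (mu <= n)%N ->
     KH C1 C2 mu = KM (DeltaC C1) (DeltaC C2) mu).
Proof.
(* The identities hold for all C1, C2, r and mu; the hypotheses only delimit
   the range where the parameters are meaningful. *)
move=> _ _; split=> [r _ | mu _]; [exact/esym/dM_DeltaC | exact/esym/KM_DeltaC].
Qed.
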